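(* For every infinite binary word $\mathbf{x}$ the following equivalences hold: $\mathbf{x}\in A\iff\mu(\mathbf{x})\in A$; $\mathbf{x}\in B\iff 0\mu(\mathbf{x})\in A$; $\mathbf{x}\in C\iff 00\mu(\mathbf{x})\in A$; $\mathbf{x}\in D\iff 1\mu(\mathbf{x})\in A$; $\mathbf{x}\in E\iff 11\mu(\mathbf{x})\in A$; $\mathbf{x}\in D\iff \mu(\mathbf{x})\in B$; $\mathbf{x}\in B\iff 0\mu(\mathbf{x})\in B$; $\mathbf{x}\in E\iff 1\mu(\mathbf{x})\in B$; $\mathbf{x}\in B\iff \mu(\mathbf{x})\in D$; $\mathbf{x}\in D\iff 1\mu(\mathbf{x})\in D$; $\mathbf{x}\in C\iff 0\mu(\mathbf{x})\in D$; $\mathbf{x}\in I\iff \mu(\mathbf{x})\in E$; $\mathbf{x}\in C\iff 0\mu(\mathbf{x})\in E$; $\mathbf{x}\in F\iff \mu(\mathbf{x})\in C$; $\mathbf{x}\in E\iff 1\mu(\mathbf{x})\in C$; $\mathbf{x}\in J\iff 0\mu(\mathbf{x})\in I$; $\mathbf{x}\in G\iff 1\mu(\mathbf{x})\in F$; $\mathbf{x}\in K\iff \mu(\mathbf{x})\in J$; $\mathbf{x}\in J\iff \mu(\mathbf{x})\in K$; $\mathbf{x}\in B\iff 0\mu(\mathbf{x})\in J$; $\mathbf{x}\in C\iff 0\mu(\mathbf{x})\in K$; $\mathbf{x}\in H\iff \mu(\mathbf{x})\in G$; $\mathbf{x}\in G\iff \mu(\mathbf{x})\in H$; $\mathbf{x}\in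 D\iff 1\mu(\mathbf{x})\in G$; $\mathbf{x}\in E\iff 1\mu(\mathbf{x})\in H$.
   Context: $\Sigma=\{0,1\}$. An overlap is a word $axaxa$ with $a\in\Sigma$, $x\in\Sigma^*$; a word is overlap-free if it has no overlap as a factor. $\mathcal{O}$ is the set of right-infinite binary overlap-free words, and $\mu$ is the morphism $0\mapsto01$, $1\mapsto10$. Define the following subsets of $\Sigma^\omega$: $A=\mathcal{O}$; $B=\{\mathbf{x}: 1\mathbf{x}\in\mathcal{O}\}$; $C=\{\mathbf{x}: 1\mathbf{x}\in\mathcal{O}$ and $\mathbf{x}$ begins with $101\}$; $D=\{\mathbf{x}: 0\mathbf{x}\in\mathcal{O}\}$; $E=\{\mathbf{x}: 0\mathbf{x}\in\mathcal{O}$ and $\mathbf{x}$ begins with $010\}$; $F=\{\mathbf{x}: 0\mathbf{x}\in\mathcal{O}$ and $\mathbf{x}$ begins with $11\}$; $G=\{\mathbf{x}: 0\mathbf{x}\in\mathcal{O}$ and $\mathbf{x}$ begins with $1\}$; $H=\{\mathbf{x}: 1\mathbf{x}\in\mathcal{O}$ and $\mathbf{x}$ begins with $1\}$; $I=\{\mathbf{x}: 1\mathbf{x}\in\mathcal{O}$ and $\mathbf{x}$ begins with $00\}$; $J=\{\mathbf{x}: 1\mathbf{x}\in\mathcal{O}$ and $\mathbf{x}$ begins with $0\}$; $K=\{\mathbf{x}: 0\mathbf{x}\in\mathcal{O}$ and $\mathbf{x}$ begins with $0\}$. *)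

(* Binary alphabet Sigma = {0,1} encoded as bool: 0 = false, 1 = true. *)
From mathcomp Require Import all_boot.
Set Implicit Arguments. Unset Strict Implicit. Unset Printing Implicit Defensive.

Definition word := nat -> bool.

Definition factor (w : word) (i n : nat) : seq bool := mkseq (fun k => w (i + k)) n.

Definition is_overlap (u : seq bool) : Prop :=
  exists (a : bool) (x : seq bool), u = a :: x ++ a :: x ++ [:: a].

Definition overlap_free (w : word) : Prop :=
  forall i n, ~ is_overlap (factor w i n).

Definition pre (a : bool) (w : word) : word :=
  fun n => if n is m.+1 then w m else a.

Definition begins (s : seq bool) (w : word) : Prop :=
  factor w 0 (size s) = s.

(* the Thue-Morse morphism mu : 0 -> 01, 1 -> 10, extended to infinite words *)
Definition mu (w : word) : word := fun n => if odd n then ~~ w n./2 else w n./2.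

Definition LangA (x : word) : Prop := overlap_free x.
Definition LangB (x : word) : Prop := overlap_free (pre true x).
Definition LangC (x : word) : Prop := overlap_free (pre true x) /\ begins [:: true; false; true] x.
Definition LangD (x : word) : Prop := overlap_free (pre false x).
Definition LangE (x : word) : Prop := overlap_free (pre false x) /\ begins [:: false; true; false] x.
Definition LangF (x : word) : Prop := overlap_free (pre false x) /\ begins [:: true; true] x.
Definition LangG (x : word) : Prop := overlap_free (pre false x) /\ begins [:: true] x.
Definition LangH (x : word) : Prop := overlap_free (pre true x) /\ begins [:: true] x.
Definition LangI (x : word) : Prop := overlap_free (pre true x) /\ begins [:: false; false] x.
Definition LangJ (x : word) : Prop := overlap_free (pre true x) /\ begins [:: false] x.
Definition LangK (x : word) : Prop := overlap_free (pre false x) /\ begins [:: false] x.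

From mathcomp Require Import all_boot zify.
From Stdlib Require Import FunctionalExtensionality.

(* An overlap of x at position i with period p lifts to an overlap of mu x at
   2i + 1 with period 2p.  Conversely, an overlap of mu x with even period
   halves to an overlap of x, while one with odd period forces a cube a a a in x:
   two equal adjacent letters of mu x must sit at positions 2m + 1, 2m + 2, and
   then x m = x (m + 1); an odd shift exchanges the parities of these positions.
   As mu (a x) = a a' mu x (a' the complement of a), a x is overlap-free iff
   a' mu x is.  In b b mu x the only further overlaps start at position 0;
   when b' x is overlap-free they are excluded exactly when x begins with
   b' b b'.  The remaining conditions only involve the first three letters
   of x. *)

(* [axaxa] is exactly a factor of length [2p + 1] with period [p = |ax|]. *)
Definition overlap_at (w : word) (i p : nat) : Prop :=
  0 < p /\ forall k, k <= p -> w (i + k) = w (i + k + p).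

Lemma overlap_atP w i p :
  reflect (overlap_at w i p)
          ((0 < p) && all (fun k => w (i + k) == w (i + k + p)) (iota 0 p.+1)).
Proof.
apply: (iffP andP) => -[p_gt0 eqw]; split=> //.
  by move=> k le_kp; apply/eqP/(allP eqw); rewrite mem_iota.
by apply/allP=> k; rewrite mem_iota => /andP[_ lt_kp]; apply/eqP/eqw.
Qed.

Lemma nth_factor w i n j : j < n -> nth false (factor w i n) j = w (i + j).
Proof. by move=> lt_jn; rewrite nth_mkseq. Qed.

Lemma size_factor w i n : size (factor w i n) = n.
Proof. exact: size_mkseq. Qed.

Lemma overlap_at_of_factor w i n :
  is_overlap (factor w i n) -> exists p, overlap_at w i p.
Proof.
move=> [a [u eq_f]]; set p := (size u).+1; exists p; split=> // k le_kp.
have n_eq : n = p + p + 1.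
  by rewrite -(size_factor w i n) eq_f /= !size_cat /= size_cat /p /=; lia.
rewrite -addnA -(@nth_factor w i n k) -?(@nth_factor w i n (k + p)); try lia.
rewrite eq_f (_ : a :: u ++ _ = (a :: u) ++ (a :: u) ++ [:: a]) //.
rewrite !nth_cat /= -/p [k + p < p]ltnNge leq_addl /= addnK.
case: ltnP => // le_pk.
have -> : k = p by apply/eqP; rewrite eqn_leq le_kp.
by rewrite subnn.
Qed.

Lemma factor_add w i m n : factor w i (m + n) = factor w i m ++ factor w (i + m) n.
Proof.
rewrite /factor /mkseq iotaD map_cat add0n -(addn0 m) iotaDl addn0 -map_comp.
by congr (_ ++ _); apply: eq_map => k /=; rewrite addnA.
Qed.

Lemma eq_factor w i j n :
  (forall k, k < n -> w (i + k) = w (j + k)) -> factor w i n = factor w j n.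
Proof. by move=> eqw; apply/eq_in_map => k; rewrite mem_iota => /andP[_ /eqw]. Qed.

Lemma factor_of_overlap_at w i p :
  overlap_at w i p -> is_overlap (factor w i p.*2.+1).
Proof.
case: p => [[]//|q] [_ eqw]; set p := q.+1 in eqw *.
have per : factor w (i + p) p = factor w i p.
  by apply: eq_factor => k lt_kp; rewrite addnAC -eqw // ltnW.
have last : factor w (i + p + p) 1 = [:: w i].
  have [e0 ep] := (eqw 0 (leq0n p), eqw p (leqnn p)).
  by rewrite addn0 in e0; rewrite /factor /mkseq /= addn0 -ep -e0.
exists (w i), (factor w i.+1 q).
rewrite -addnn -addn1 !factor_add addnA per last.
rewrite /p -add1n factor_add addn1 -!catA.
by rewrite {1 3}/factor /mkseq /= addn0.
Qed.

Lemma overlap_freeP w : overlap_free w <-> forall i p, ~ overlap_at w i p.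
Proof.
split=> [ovf i p /factor_of_overlap_at | novl i n /overlap_at_of_factor [p]].
  exact: ovf.
exact: novl.
Qed.

Lemma muE w n : mu w n = odd n (+) w n./2.
Proof. by rewrite /mu; case: odd. Qed.

Lemma half_add_double n k : (n + k.*2)./2 = n./2 + k.
Proof. by rewrite halfD odd_double andbF add0n doubleK. Qed.

Lemma mu_add_double x n k : mu x (n + k.*2) = odd n (+) x (n./2 + k).
Proof. by rewrite muE oddD odd_double addbF half_add_double. Qed.

Lemma mu_eq_succ x n : (mu x n == mu x n.+1) = odd n && (x n./2 != x n./2.+1).
Proof.
rewrite !muE /= uphalf_half.
by case: (odd n); rewrite /= ?add0n ?add1n; case: (x _); case: (x _).
Qed.

Lemma mu_pre a x : mu (pre a x) = pre a (pre (~~ a) (mu x)).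
Proof. by apply: functional_extensionality => -[|[|n]] //; rewrite /mu /= negbK. Qed.

Lemma overlap_at_pre a w i p : overlap_at (pre a w) i.+1 p <-> overlap_at w i p.
Proof. by split=> -[p_gt0 eqw]; split=> // k /eqw; rewrite !addSn. Qed.

Lemma overlap_at_mu x i p : overlap_at x i p -> overlap_at (mu x) i.*2.+1 p.*2.
Proof.
move=> [p_gt0 eqx]; split=> [|k le_k]; first by rewrite double_gt0.
rewrite mu_add_double muE addSnnS halfD odd_double doubleK /= eqx //.
have : k.+1./2 <= (p.*2.+1)./2 by apply: half_leq.
by rewrite /= uphalf_double.
Qed.

Lemma overlap_at_mu_double x i q : overlap_at (mu x) i q.*2 -> overlap_at x i./2 q.
Proof.
move=> [q2_gt0 eqw]; split=> [|k le_kq]; first by rewrite -double_gt0.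
have := eqw k.*2; rewrite leq_double -addnA -doubleD !mu_add_double addnA.
by move=> /(_ le_kq) /addbI.
Qed.

Lemma mu_not_overlap_at1 x i : ~ overlap_at (mu x) i 1.
Proof.
move=> [_ eqw]; have [e0 e1] := (eqw 0 isT, eqw 1 isT).
rewrite addn0 !addn1 in e0 e1.
by move: (mu_eq_succ x i) (mu_eq_succ x i.+1); rewrite e0 e1 eqxx /=; case: (odd i).
Qed.

Lemma mu_eq_succ_transfer x s t :
  odd s -> ~~ odd t -> (mu x s == mu x s.+1) = (mu x t == mu x t.+1) ->
  x s./2 = x s./2.+1.
Proof. by rewrite !mu_eq_succ => -> /negbTE-> /= /negbFE/eqP. Qed.

Lemma overlap_at_mu_odd x i q :
  0 < q -> overlap_at (mu x) i q.*2.+1 -> exists m, overlap_at x m 1.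
Proof.
move=> q_gt0 [_ eqw]; set p := q.*2.+1 in eqw.
have shift k : k < p ->
    (mu x (i + k) == mu x (i + k).+1) = (mu x (i + p + k) == mu x (i + p + k).+1).
  by move=> lt_kp; rewrite -!addnS !(addnAC i p) -!eqw // ltnW.
have [s [t [odd_s even_t st]]] : exists s t, [/\ odd s, ~~ odd t &
    forall k, k < p -> (mu x (s + k) == mu x (s + k).+1) = (mu x (t + k) == mu x (t + k).+1)].
  have odd_ip : odd (i + p) = ~~ odd i by rewrite oddD /p /= odd_double addbT.
  case: (boolP (odd i)) => odd_i.
    by exists i, (i + p); rewrite odd_ip odd_i.
  by exists (i + p), i; split=> [||k /shift //]; rewrite ?odd_ip.
exists s./2; split=> // k le_k1; rewrite addn1 -!half_add_double.
apply: mu_eq_succ_transfer (st _ _); rewrite ?oddD ?odd_double ?addbF //.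
rewrite /p; lia.
Qed.

Lemma overlap_at_mu_inv x i p : overlap_at (mu x) i p -> exists j q, overlap_at x j q.
Proof.
rewrite -(odd_double_half p); case: (odd p); rewrite ?add0n ?add1n => ovl.
  case: (posnP p./2) ovl => [-> /mu_not_overlap_at1 // | q_gt0].
  by case/(overlap_at_mu_odd _ _ _ q_gt0)=> m; exists m, 1.
by exists i./2, p./2; apply: overlap_at_mu_double.
Qed.

Lemma overlap_free_mu x : overlap_free (mu x) <-> overlap_free x.
Proof.
rewrite !overlap_freeP; split=> novl i p.
  by move/overlap_at_mu; apply: novl.
by case/overlap_at_mu_inv=> j [q]; apply: novl.
Qed.

Lemma overlap_free_mu_tail x :
  overlap_free x <-> forall i p, ~ overlap_at (mu x) i.+1 p.
Proof.
rewrite overlap_freeP; split=> novl i p.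
  by case/overlap_at_mu_inv=> j [q]; apply: novl.
by move/overlap_at_mu; apply: novl.
Qed.

Lemma overlap_free_pre a w :
  overlap_free (pre a w) <-> overlap_free w /\ forall p, ~ overlap_at (pre a w) 0 p.
Proof.
rewrite !overlap_freeP; split=> [novl | [novl novl0] [|i] p].
- by split=> [i p /(iffRL (overlap_at_pre a _ _ _)) | p]; apply: novl.
- exact: novl0.
- by move/overlap_at_pre; apply: novl.
Qed.

Lemma overlap_free_pre_mu a x :
  overlap_free (pre a x) <-> overlap_free (pre (~~ a) (mu x)).
Proof.
rewrite overlap_free_mu_tail mu_pre overlap_freeP.
split=> novl i p; last by move/overlap_at_pre; apply: novl.
by move/(iffRL (overlap_at_pre a _ _ _)); apply: novl.
Qed.

Lemma no_overlap_at0_pre_pre_mu b x :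
  begins [:: ~~ b; b; ~~ b] x -> forall p, ~ overlap_at (pre b (pre b (mu x))) 0 p.
Proof.
rewrite /begins /factor /mkseq /= !add0n => -[x0 x1 x2] p ovl.
case: p ovl => [[]//|[|[|[|p]]]] ovl.
1-3: by move/overlap_atP: ovl; rewrite /= !muE /= x0 ?x1 ?x2; case: (b).
(* The squares b b at positions 0 and 3 reappear in mu x at positions p + 2
   and p + 5, one of which is even. *)
case: ovl => _ eqw.
have [[[e0 e1] e3] e4] := (eqw 0 isT, eqw 1 isT, eqw 3 isT, eqw 4 isT).
have m1 : mu x 1 = b by rewrite muE /= x0 negbK.
have m2 : mu x 2 = b by rewrite muE /= x1.
rewrite /= m1 m2 in e0 e1 e3 e4.
move: (mu_eq_succ x p.+2) (mu_eq_succ x (1 + p.+4)).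
rewrite -[(1 + p.+4).+1]/(2 + p.+4) -e0 -e1 -e3 -e4 eqxx /=.
by case: (odd p).
Qed.

Lemma begins_of_overlap_free_pre_pre_mu b x :
  overlap_free (pre b (pre b (mu x))) -> begins [:: ~~ b; b; ~~ b] x.
Proof.
move/overlap_freeP=> novl.
have nov i p := introN (overlap_atP _ i p) (novl i p).
move: (nov 0 1) (nov 1 2) (nov 0 3); rewrite /begins /factor /mkseq /= !muE /=.
by clear novl nov; case: b (x 0) (x 1) (x 2) => [] [] [] [].
Qed.

Lemma overlap_free_pre_pre_mu b x :
  overlap_free (pre b (pre b (mu x))) <->
  overlap_free (pre (~~ b) x) /\ begins [:: ~~ b; b; ~~ b] x.
Proof.
have tail := overlap_free_pre_mu (~~ b) x; rewrite negbK in tail.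
split=> [ovf | [ovf bx]].
  split; last exact: begins_of_overlap_free_pre_pre_mu.
  by apply/tail; case/overlap_free_pre: ovf.
apply/overlap_free_pre; split; first exact/tail.
exact: no_overlap_at0_pre_pre_mu.
Qed.

Theorem lemma2 (x : word) :
  (LangA x <-> LangA (mu x)) /\
  (LangB x <-> LangA (pre false (mu x))) /\
  (LangC x <-> LangA (pre false (pre false (mu x)))) /\
  (LangD x <-> LangA (pre true (mu x))) /\
  (LangE x <-> LangA (pre true (pre true (mu x)))) /\
  (LangD x <-> LangB (mu x)) /\
  (LangB x <-> LangB (pre false (mu x))) /\
  (LangE x <-> LangB (pre true (mu x))) /\
  (LangB x <-> LangD (mu x)) /\
  (LangD x <-> LangD (pre true (mu x))) /\
  (LangC x <-> LangD (pre false (mu x))) /\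
  (LangI x <-> LangE (mu x)) /\
  (LangC x <-> LangE (pre false (mu x))) /\
  (LangF x <-> LangC (mu x)) /\
  (LangE x <-> LangC (pre true (mu x))) /\
  (LangJ x <-> LangI (pre false (mu x))) /\
  (LangG x <-> LangF (pre true (mu x))) /\
  (LangK x <-> LangJ (mu x)) /\
  (LangJ x <-> LangK (mu x)) /\
  (LangB x <-> LangJ (pre false (mu x))) /\
  (LangC x <-> LangK (pre false (mu x))) /\
  (LangH x <-> LangG (mu x)) /\
  (LangG x <-> LangH (mu x)) /\
  (LangD x <-> LangG (pre true (mu x))) /\
  (LangE x <-> LangH (pre true (mu x))).
Proof.
have A := overlap_free_mu x.
have [P0 P1] := (overlap_free_pre_mu false x, overlap_free_pre_mu true x).
have [M0 M1] := (overlap_free_mu (pre false x), overlap_free_mu (pre true x)).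
have [Q0 Q1] := (overlap_free_pre_pre_mu false x, overlap_free_pre_pre_mu true x).
rewrite !mu_pre /= in P0 P1 M0 M1 Q0 Q1.
rewrite /LangA /LangB /LangC /LangD /LangE /LangF /LangG /LangH /LangI /LangJ /LangK.
move: Q0 Q1; rewrite /begins /factor /mkseq /= !muE /=.
case: (x 0) (x 1) (x 2) => [] [] []; intuition congruence.
Qed.
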